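(* Let $\mathbf M\in\mathbb C^{m\times m}$ and $\mathbf N\in\mathbb C^{n\times n}$ be Hermitian positive definite, let $\mathbf A\in\mathbb C^{m\times n}$ with $\operatorname{rank}\mathbf A=r<\min\{m,n\}$, and put $\mathbf A^{\sharp}=\mathbf N^{-1}\mathbf A^{*}\mathbf M$. Then the weighted Moore–Penrose inverse $\mathbf A^{+}_{M,N}=(\tilde a^{+}_{ij})\in\mathbb C^{n\times m}$ satisfies, for all $i=1,\dots,n$, $j=1,\dots,m$, \[ \tilde a^{+}_{ij}=\frac{\sum_{\beta\in J_{r,n}\{i\}}\left|\left((\mathbf A^{\sharp}\mathbf A)_{.i}(\mathbf a^{\sharp}_{.j})\right)^{\beta}_{\beta}\right|}{\sum_{\beta\in J_{r,n}}\left|(\mathbf A^{\sharp}\mathbf A)^{\beta}_{\beta}\right|}, \] where $\mathbf a^{\sharp}_{.j}$ is the $j$-th column of $\mathbf A^{\sharp}$.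
   Context: All matrices are complex; $\mathbf M^{*}$ is the conjugate transpose. The weighted Moore–Penrose inverse $\mathbf A^{+}_{M,N}$ of $\mathbf A\in\mathbb C^{m\times n}$ is the unique $\mathbf X\in\mathbb C^{n\times m}$ with $\mathbf A\mathbf X\mathbf A=\mathbf A$, $\mathbf X\mathbf A\mathbf X=\mathbf X$, $(\mathbf M\mathbf A\mathbf X)^{*}=\mathbf M\mathbf A\mathbf X$, $(\mathbf N\mathbf X\mathbf A)^{*}=\mathbf N\mathbf X\mathbf A$. For a square matrix $\mathbf P$, $\mathbf P_{.i}(\mathbf c)$ is the matrix obtained from $\mathbf P$ by replacing its $i$-th column by the column vector $\mathbf c$. For $1\le k\le p$, $J_{k,p}$ is the set of strictly increasing sequences $(\beta_1<\dots<\beta_k)$ of elements of $\{1,\dots,p\}$ and $J_{k,p}\{i\}=\{\beta\in J_{k,p}: i\in\beta\}$. For $\beta\in J_{k,p}$, $\mathbf P^{\beta}_{\beta}$ is the principal submatrix with rows and columns indexed by $\beta$, and $|\cdot|$ denotes the determinant. *)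

From HB Require Import structures.
From mathcomp Require Import all_boot all_order all_algebra.
Set Implicit Arguments. Unset Strict Implicit. Unset Printing Implicit Defensive.
Import Order.TTheory GRing.Theory Num.Theory.
Local Open Scope ring_scope.

Definition ctmx (C : numClosedFieldType) m n (A : 'M[C]_(m, n)) : 'M[C]_(n, m) :=
  (map_mx Num.conj A)^T.

Definition hpd (C : numClosedFieldType) m (M : 'M[C]_m) : Prop :=
  ctmx M = M /\ forall x : 'cV[C]_m, x != 0 -> 0 < (ctmx x *m M *m x) 0 0.

Definition is_wmp_inverse (C : numClosedFieldType) m n
  (M : 'M[C]_m) (N : 'M[C]_n) (A : 'M[C]_(m, n)) (X : 'M[C]_(n, m)) : Prop :=
  [/\ A *m X *m A = A, X *m A *m X = X,
      ctmx (M *m A *m X) = M *m A *m X & ctmx (N *m X *m A) = N *m X *m A].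

Definition replace_col (C : numClosedFieldType) n (P : 'M[C]_n) (i : 'I_n)
  (c : 'cV[C]_n) : 'M[C]_n :=
  \matrix_(k, l) (if l == i then c k 0 else P k l).

(* |P^beta_beta|: principal minor with rows/columns indexed by beta (in
   increasing order, via enum_val). *)
Definition pminor (C : numClosedFieldType) n (P : 'M[C]_n) (beta : {set 'I_n}) : C :=
  \det (\matrix_(k < #|beta|, l < #|beta|)
          P (enum_val k) (enum_val l)).

(* Put P := A^#A and W := A^+A.  Then W is an idempotent of rank r with
   WP = P = PW and P Y = W for Y := A^+ M^-1 (A^+)^* N.  Expanding det(P + X I)
   along principal minors, the coefficient of X^(n-r) is the sum of the r x r
   principal minors of P; the factorisation P + X I = (W + X V)(V + X W + P)
   with V := I - W, together with det(W + X V) = X^(n-r), identifies it with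
   det(V + P), which is nonzero since (V + P)(V + W Y) = I.  Cramer's rule for
   P + X I applied to the column a^#_.j = P x, with x the j-th column of A^+,
   gives the numerator after comparing coefficients of X^(n-r): the spurious
   term consists of (r+1) x (r+1) principal minors of a matrix of rank at most
   r, hence vanishes. *)

From Pilot Require Import Defs.
From HB Require Import structures.
From mathcomp Require Import all_boot all_order all_algebra.
From mathcomp Require Import perm zify ring.
Import Order.TTheory GRing.Theory Num.Theory.
Local Open Scope ring_scope.
Set Implicit Arguments. Unset Strict Implicit. Unset Printing Implicit Defensive.

Section PrincipalMinors.
Variable R : comNzRingType.

(* [pminor] and [replace_col] of Defs, over an arbitrary commutative ring. *)
Definition principal_minor n (P : 'M[R]_n) (S : {set 'I_n}) : R :=
  \det (\matrix_(k < #|S|, l < #|S|) P (enum_val k) (enum_val l)).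

Definition replace_col_mx n (P : 'M[R]_n) (i : 'I_n) (c : 'cV[R]_n) : 'M[R]_n :=
  \matrix_(k, l) (if l == i then c k 0 else P k l).

Definition row_mix n (A B : 'M[R]_n) (J : {set 'I_n}) : 'M[R]_n :=
  \matrix_(i, j) if i \in J then B i j else A i j.

Definition minor_pad_mx n (A : 'M[R]_n) (S : {set 'I_n}) : 'M[R]_n :=
  \matrix_(i, j) if i \in S then A i j else (i == j)%:R.

Lemma det_mxsub_inj m n (g : 'I_m -> 'I_n) (A : 'M[R]_n) :
  m = n -> injective g -> \det (mxsub g g A) = \det A.
Proof.
move=> e; subst m => ginj; pose p := perm ginj.
have -> : mxsub g g A = row_perm p (col_perm p A).
  by apply/matrixP => i j; rewrite !mxE !permE.
rewrite row_permE col_permE !det_mulmx !det_perm odd_permV.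
by rewrite mulrCA -signr_addb addbb mulr1.
Qed.

Lemma det_addmx_row_mix n (A B : 'M[R]_n) :
  \det (A + B) = \sum_(J : {set 'I_n}) \det (row_mix A B J).
Proof.
rewrite /determinant.
under eq_bigr => s _.
  rewrite (eq_bigr (fun i => B i (s i) + A i (s i))); last first.
    by move=> i _; rewrite !mxE addrC.
  rewrite bigA_distr big_distrr /=.
  over.
rewrite exchange_big /=; apply: eq_bigr => J _; apply: eq_bigr => s _.
by congr (_ * _); apply: eq_bigr => i _; rewrite !mxE.
Qed.

Lemma det_minor_pad_mx n (A : 'M[R]_n) (S : {set 'I_n}) :
  \det (minor_pad_mx A S) = principal_minor A S.
Proof.
pose g (k : 'I_(#|S| + #|~: S|)) : 'I_n :=
  match split k with inl a => enum_val a | inr b => enum_val b end.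
have gl a : g (lshift _ a) = enum_val a by rewrite /g (unsplitK (inl _ a)).
have gr b : g (rshift _ b) = enum_val b by rewrite /g (unsplitK (inr _ b)).
have ginj : injective g.
  move=> k1 k2; rewrite -[k1]splitK -[k2]splitK.
  case: (split k1) => [a1|b1]; case: (split k2) => [a2|b2] /=; rewrite ?gl ?gr.
  - by move/enum_val_inj ->.
  - by move=> e; have := enum_valP a1; have := enum_valP b2; rewrite e inE => /negP.
  - by move=> e; have := enum_valP a2; have := enum_valP b1; rewrite e inE => /negP.
  - by move/enum_val_inj ->.
have cardS : (#|S| + #|~: S| = n)%N by rewrite cardsC card_ord.
rewrite -(det_mxsub_inj (minor_pad_mx A S) cardS ginj) -[mxsub _ _ _]submxK.
have -> : dlsubmx (mxsub g g (minor_pad_mx A S)) = 0.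
  apply/matrixP => i j; rewrite !mxE gl gr.
  have := enum_valP i; rewrite inE => /negPf ->.
  case: eqP => // ej; have := enum_valP j; have := enum_valP i.
  by rewrite ej inE => /negP.
have -> : drsubmx (mxsub g g (minor_pad_mx A S)) = 1%:M.
  apply/matrixP => i j; rewrite !mxE !gr.
  have := enum_valP i; rewrite inE => /negPf ->.
  by rewrite (inj_eq enum_val_inj).
rewrite det_ublock det1 mulr1; congr (\det _).
by apply/matrixP => i j; rewrite !mxE !gl enum_valP.
Qed.

Lemma det_add_diag_mx n (A : 'M[R]_n) (d : 'rV[R]_n) :
  \det (A + diag_mx d) =
  \sum_(S : {set 'I_n}) (\prod_(k in ~: S) d 0 k) * principal_minor A S.
Proof.
rewrite det_addmx_row_mix (reindex_inj (@setC_inj _)) /=.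
apply: eq_bigr => S _.
have -> : row_mix A (diag_mx d) (~: S) =
   diag_mx (\row_k if k \in ~: S then d 0 k else 1) *m minor_pad_mx A S.
  apply/matrixP => i j; rewrite mul_diag_mx !mxE.
  case: ifP => iS; rewrite inE in iS; first by rewrite (negPf iS) mulr_natr.
  by move/negbFE: iS => ->; rewrite mul1r.
rewrite det_mulmx det_diag det_minor_pad_mx; congr (_ * _).
by rewrite [RHS]big_mkcond /=; apply: eq_bigr => k _; rewrite mxE.
Qed.

Lemma det_replace_col n (Q : 'M[R]_n) i (v : 'cV[R]_n) :
  \det (replace_col_mx Q i v) = (\adj Q *m v) i 0.
Proof.
rewrite (expand_det_col _ i) !mxE; apply: eq_bigr => k _.
rewrite !mxE eqxx mulrC; congr (_ * _).
rewrite /cofactor; congr (_ * \det _).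
apply/matrixP => a b; rewrite !mxE; case: eqP => // h.
by have := neq_lift i b; rewrite h eqxx.
Qed.

Lemma mulmx_replace_col n (A B : 'M[R]_n) i (v : 'cV[R]_n) :
  A *m replace_col_mx B i v = replace_col_mx (A *m B) i (A *m v).
Proof.
apply/matrixP => k l; rewrite !mxE; case: eqP => hl.
  by apply: eq_bigr => a _; rewrite !mxE hl eqxx.
by apply: eq_bigr => a _; rewrite !mxE (introF eqP hl).
Qed.

End PrincipalMinors.

Section RankAndCoefficients.
Variable F : fieldType.
Local Notation mp := (map_mx (@polyC F)).

Lemma det_rank_lt n (A : 'M[F]_n) : (\rank A < n)%N -> \det A = 0.
Proof.
move=> rkA; apply/eqP; apply: contraLR rkA => detA; rewrite -leqNgt.
by rewrite mxrank_unit // unitmxE unitfE.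
Qed.

Lemma principal_minor_rank_lt n (P : 'M[F]_n) (S : {set 'I_n}) :
  (\rank P < #|S|)%N -> principal_minor P S = 0.
Proof.
move=> rkP; apply: det_rank_lt.
have -> : \matrix_(k < #|S|, l < #|S|) P (enum_val k) (enum_val l) =
          rowsub enum_val 1%:M *m P *m colsub enum_val 1%:M.
  rewrite mul_rowsub_mx mul1mx mulmx_colsub mulmx1.
  by apply/matrixP => k l; rewrite !mxE.
apply: leq_ltn_trans rkP; apply: leq_trans (mxrankM_maxl _ _) _.
exact: mxrankM_maxr.
Qed.

Lemma det_row_mix_rank_lt n (A B : 'M[F]_n) (J : {set 'I_n}) :
  (\rank B < #|J|)%N -> \det (row_mix A B J) = 0.
Proof.
move=> rkB; apply: det_rank_lt.
pose AJc := rowsub (enum_val : 'I_#|~: J| -> 'I_n) A.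
have mix_sub : (row_mix A B J <= B + AJc)%MS.
  apply/row_subP => i; case: (boolP (i \in J)) => iJ.
    have -> : row i (row_mix A B J) = row i B by apply/rowP => k; rewrite !mxE iJ.
    exact: submx_trans (row_sub i B) (addsmxSl B AJc).
  have iJc : i \in ~: J by rewrite inE.
  have -> : row i (row_mix A B J) = row (enum_rank_in iJc i) AJc.
    by apply/rowP => k; rewrite !mxE enum_rankK_in // (negPf iJ).
  exact: submx_trans (row_sub _ AJc) (addsmxSr B AJc).
have cardJ : (#|J| + #|~: J| = n)%N by rewrite cardsC card_ord.
apply: leq_ltn_trans (mxrankS mix_sub) _.
case: (mxrank_adds_leqif B AJc) => rk_adds _.
apply: leq_ltn_trans rk_adds _.
have := rank_leq_row AJc; lia.
Qed.

Lemma principal_minor_map_polyC n (P : 'M[F]_n) (S : {set 'I_n}) :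
  principal_minor (mp P) S = (principal_minor P S)%:P.
Proof.
rewrite /principal_minor -det_map_mx; congr (\det _).
by apply/matrixP => a b; rewrite !mxE.
Qed.

Lemma coef_det_add_Xdiag n (P : 'M[F]_n) (U : {set 'I_n}) (a : nat) :
  (\det (mp P + diag_mx (\row_k ('X *+ (k \in U)))))`_a =
  \sum_(S : {set 'I_n} | (#|~: S| == a) && (~: S \subset U)) principal_minor P S.
Proof.
rewrite det_add_diag_mx coef_sum [RHS]big_mkcond /=; apply: eq_bigr => S _.
rewrite principal_minor_map_polyC.
have -> : \prod_(k in ~: S) (\row_k ('X *+ (k \in U)) : 'rV[{poly F}]_n) 0 k =
          if ~: S \subset U then 'X ^+ #|~: S| else 0.
  case: (boolP (~: S \subset U)) => SU.
    by rewrite -prodr_const; apply: eq_bigr => k kS; rewrite mxE (subsetP SU k kS).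
  have [k kS kU] : exists2 k, k \in ~: S & k \notin U by apply/subsetPn.
  by rewrite (bigD1 k) //= mxE (negPf kU) mulr0n mul0r.
case: (~: S \subset U); last by rewrite mul0r coef0 andbF.
by rewrite andbT mulrC coefCM coefXn eq_sym; case: eqP; rewrite ?mulr1 ?mulr0.
Qed.

Lemma coef_det_add_Xdiag_rank_lt n (P : 'M[F]_n) (U : {set 'I_n}) (a : nat) :
  (\rank P < n - a)%N -> (\det (mp P + diag_mx (\row_k ('X *+ (k \in U)))))`_a = 0.
Proof.
move=> rkP; rewrite coef_det_add_Xdiag big1 // => S /andP[/eqP cardSc _].
apply: principal_minor_rank_lt; apply: leq_trans rkP _.
by have := cardsC S; rewrite card_ord; lia.
Qed.

Lemma scalar_X_diag n :
  'X%:M = diag_mx (\row_k ('X *+ (k \in [set: 'I_n]))) :> 'M[{poly F}]_n.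
Proof. by apply/matrixP => a b; rewrite !mxE inE. Qed.

Lemma replace_col_add_X n (P : 'M[F]_n) i (v : 'cV[F]_n) :
  replace_col_mx (mp P + 'X%:M) i (mp v) =
  mp (replace_col_mx P i v) + diag_mx (\row_k ('X *+ (k \in [set~ i]))).
Proof.
apply/matrixP => k l; rewrite !mxE !inE; case: eqP => [->|li].
  by case: eqP => [->|_]; rewrite ?eqxx ?mulr0n ?addr0.
by case: eqP => [->|_]; rewrite ?(introF eqP li) ?mulr0n.
Qed.

Lemma coef_det_add_X n (P : 'M[F]_n) (r : nat) : (r <= n)%N ->
  (\det (mp P + 'X%:M))`_(n - r) =
  \sum_(S : {set 'I_n} | #|S| == r) principal_minor P S.
Proof.
move=> rn; rewrite scalar_X_diag coef_det_add_Xdiag; apply: eq_bigl => S.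
rewrite subsetT andbT; have := cardsC S; rewrite card_ord.
by move=> cardS; apply/eqP/eqP; lia.
Qed.

Lemma coef_det_replace_col_add_X n (P : 'M[F]_n) i (v : 'cV[F]_n) (r : nat) :
  (r <= n)%N ->
  (\det (replace_col_mx (mp P + 'X%:M) i (mp v)))`_(n - r) =
  \sum_(S : {set 'I_n} | (#|S| == r) && (i \in S))
     principal_minor (replace_col_mx P i v) S.
Proof.
move=> rn; rewrite replace_col_add_X coef_det_add_Xdiag; apply: eq_bigl => S.
rewrite setCS sub1set; congr (_ && _); have := cardsC S; rewrite card_ord.
by move=> cardS; apply/eqP/eqP; lia.
Qed.

Lemma det_projector_pencil n r (W V : 'M[F]_n) :
  (\rank W <= r)%N -> (\rank V <= n - r)%N -> W + V = 1%:M -> (r <= n)%N ->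
  \det (mp W + 'X *: mp V) = 'X ^+ (n - r).
Proof.
move=> rkW rkV WV rn.
pose s := \sum_(J : {set 'I_n} | #|J| == (n - r)%N) \det (row_mix W V J).
have detE : \det (mp W + 'X *: mp V) = 'X ^+ (n - r) * s%:P.
  rewrite det_addmx_row_mix.
  transitivity (\sum_(J : {set 'I_n}) 'X ^+ #|J| * (\det (row_mix W V J))%:P).
    apply: eq_bigr => J _.
    have -> : row_mix (mp W) ('X *: mp V) J =
        diag_mx (\row_k (if k \in J then 'X else 1)) *m mp (row_mix W V J).
      apply/matrixP => a b; rewrite mul_diag_mx !mxE.
      by case: (a \in J); rewrite ?mul1r.
    rewrite det_mulmx det_diag det_map_mx; congr (_ * _).
    rewrite (eq_bigr (fun k => if k \in J then 'X else 1)); last by move=> k _; rewrite mxE.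
    by rewrite -big_mkcond prodr_const.
  rewrite (bigID (fun J : {set 'I_n} => #|J| == (n - r)%N)) /= [X in _ + X]big1 ?addr0.
    by rewrite /s rmorph_sum mulr_sumr; apply: eq_bigr => J /eqP ->.
  move=> J cardJ; suff -> : \det (row_mix W V J) = 0 by rewrite mulr0.
  have cardJc : (#|J| + #|~: J| = n)%N by rewrite cardsC card_ord.
  case: (ltngtP #|J| (n - r)) cardJ => // ltJ _; last by apply: det_row_mix_rank_lt; lia.
  have -> : row_mix W V J = row_mix V W (~: J).
    by apply/matrixP => a b; rewrite !mxE inE; case: (a \in J).
  by apply: det_row_mix_rank_lt; lia.
suff s1 : s = 1 by rewrite detE s1 mulr1.
have := congr1 (horner_eval 1) detE.
rewrite -det_map_mx !horner_evalE hornerM hornerXn hornerC expr1n mul1r => <-.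
have -> : map_mx (horner_eval 1) (mp W + 'X *: mp V) = 1%:M.
  rewrite -WV; apply/matrixP => a b; rewrite !mxE !horner_evalE.
  by rewrite hornerD hornerM hornerX !hornerC mul1r.
by rewrite det1.
Qed.

End RankAndCoefficients.

Section ProjectorCramer.
Variables (F : fieldType) (n : nat) (P W Y : 'M[F]_n).
Hypotheses (WP : W *m P = P) (PW : P *m W = P) (PY : P *m Y = W).
Local Notation mp := (map_mx (@polyC F)).
Local Notation Q := (mp P + 'X%:M).

Lemma projector_idem : W *m W = W.
Proof. by rewrite -{2}PY mulmxA WP PY. Qed.

Lemma coef_det_add_X_rank_neq0 : (\det Q)`_(n - \rank W) != 0.
Proof.
pose V := 1%:M - W.
have WW := projector_idem.
have VW : V *m W = 0 by rewrite mulmxBl mul1mx WW subrr.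
have WV : W *m V = 0 by rewrite mulmxBr mulmx1 WW subrr.
have VV : V *m V = V by rewrite {1}/V mulmxBl mul1mx WV subr0.
have VP : V *m P = 0 by rewrite mulmxBl mul1mx WP subrr.
have PV : P *m V = 0 by rewrite mulmxBr mulmx1 PW subrr.
have rkV : (\rank V <= n - \rank W)%N.
  by rewrite -mxrank_ker; apply: mxrankS; rewrite sub_kermx VW.
have factor : Q = (mp W + 'X *: mp V) *m (mp V + 'X *: mp W + mp P).
  rewrite mulmxDl !mulmxDr -!scalemxAl -!scalemxAr !scalerA -!map_mxM.
  rewrite WV VW WW VV WP VP !map_mx0 /V.
  apply/matrixP => a b; rewrite !mxE.
  by case: eqP => [<-|_]; rewrite ?subr0 ?sub0r ?rmorphB ?rmorphN /=; ring.
have VP_unit : V + P \in unitmx.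
  have VP_inv : (V + P) *m (V + W *m Y) = 1%:M.
    rewrite mulmxDl (mulmxDr V V) (mulmxDr P V) VV PV mulmxA VW mul0mx mulmxA PW PY.
    by rewrite addr0 add0r /V subrK.
  by case/mulmx1_unit: VP_inv.
rewrite factor det_mulmx (@det_projector_pencil _ n (\rank W)) //; last first.
- exact: rank_leq_row.
- by rewrite /V addrC subrK.
rewrite coefXnM ltnn subnn -horner_coef0 -horner_evalE -det_map_mx.
have -> : map_mx (horner_eval 0) (mp V + 'X *: mp W + mp P) = V + P.
  by apply/matrixP => a b; rewrite !mxE !horner_evalE !hornerE.
by rewrite -unitfE -unitmxE.
Qed.

Lemma projector_cramer (x : 'cV[F]_n) (i : 'I_n) : W *m x = x ->
  x i 0 =
    (\sum_(S : {set 'I_n} | (#|S| == \rank W) && (i \in S))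
        principal_minor (replace_col_mx P i (P *m x)) S)
    / \sum_(S : {set 'I_n} | #|S| == \rank W) principal_minor P S.
Proof.
move=> Wx; have rn : (\rank W <= n)%N := rank_leq_row W.
rewrite -coef_det_add_X // -coef_det_replace_col_add_X //.
have adj_Px : \adj Q *m mp (P *m x) = \det Q *: mp x - 'X *: (\adj Q *m mp x).
  have PQ : mp P = Q - 'X%:M by rewrite addrK.
  rewrite map_mxM [in X in _ *m X]PQ mulmxBl !mulmxBr mulmxA mul_adj_mx.
  by rewrite !mul_scalar_mx scalemxAr.
have rk_replace : (\rank (replace_col_mx P i x) <= \rank W)%N.
  have -> : replace_col_mx P i x = P *m replace_col_mx 1%:M i (Y *m x).
    by rewrite mulmx_replace_col mulmx1 mulmxA PY Wx.
  by apply: leq_trans (mxrankM_maxl _ _) _; rewrite -WP mxrankM_maxl.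
have -> : (\det (replace_col_mx Q i (mp (P *m x))))`_(n - \rank W) =
          (\det Q)`_(n - \rank W) * x i 0.
  rewrite det_replace_col adj_Px.
  have -> : (\det Q *: mp x - 'X *: (\adj Q *m mp x)) i 0 =
            \det Q * (x i 0)%:P - 'X * (\adj Q *m mp x) i 0 by rewrite !mxE.
  rewrite -det_replace_col coefB coefMC coefXM.
  case: eqP => [_|nr]; first by rewrite subr0.
  rewrite replace_col_add_X coef_det_add_Xdiag_rank_lt ?subr0 //.
  by apply: leq_ltn_trans rk_replace _; lia.
by rewrite mulrC mulKf // coef_det_add_X_rank_neq0.
Qed.

End ProjectorCramer.

Section ConjugateTranspose.
Variable C : numClosedFieldType.

Lemma ctmxM m n p (A : 'M[C]_(m, n)) (B : 'M[C]_(n, p)) :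
  ctmx (A *m B) = ctmx B *m ctmx A.
Proof. by rewrite /ctmx map_mxM trmx_mul. Qed.

Lemma ctmxK m n (A : 'M[C]_(m, n)) : ctmx (ctmx A) = A.
Proof. by apply/matrixP => i j; rewrite /ctmx !mxE conjCK. Qed.

Lemma hpd_unit n (M : 'M[C]_n) : hpd M -> M \in unitmx.
Proof.
case=> _ M_pos; rewrite unitmxE unitfE; apply/negP => /det0P[v v0 vM].
have v'0 : ctmx v != 0.
  by apply: contra v0 => /eqP v'0; rewrite -[v]ctmxK v'0 /ctmx map_mx0 trmx0.
by have := M_pos _ v'0; rewrite ctmxK vM mul0mx mxE ltxx.
Qed.

End ConjugateTranspose.

Section WeightedMoorePenrose.
Variables (C : numClosedFieldType) (m n : nat).
Variables (M : 'M[C]_m) (N : 'M[C]_n) (A : 'M[C]_(m, n)) (X : 'M[C]_(n, m)).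
Hypotheses (M_hpd : hpd M) (N_hpd : hpd N) (wmpX : is_wmp_inverse M N A X).
Local Notation Ash := (invmx N *m ctmx A *m M).

Lemma wmp_sharp_mulmx : Ash *m A *m X = Ash.
Proof.
have [AXA _ MAX_herm _] := wmpX; have [M_herm _] := M_hpd.
have AMAX : ctmx A *m (M *m A *m X) = ctmx A *m M.
  by rewrite -MAX_herm !ctmxM M_herm !mulmxA -!ctmxM !mulmxA AXA.
by rewrite -!mulmxA (mulmxA M) AMAX !mulmxA.
Qed.

Lemma wmp_mulmx_ct : X *m A = invmx N *m ctmx A *m ctmx X *m N.
Proof.
have [_ _ _ NXA_herm] := wmpX; have [N_herm _] := N_hpd.
have NXA : N *m X *m A = ctmx A *m ctmx X *m N.
  by rewrite -NXA_herm !ctmxM N_herm mulmxA.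
have -> : invmx N *m ctmx A *m ctmx X *m N = invmx N *m (ctmx A *m ctmx X *m N).
  by rewrite !mulmxA.
by rewrite -NXA -!mulmxA mulKmx // hpd_unit.
Qed.

Lemma wmp_mulmx_sharp : X *m A *m (Ash *m A) = Ash *m A.
Proof.
have [AXA _ _ _] := wmpX.
have AXA' : ctmx A *m (ctmx X *m ctmx A) = ctmx A by rewrite -!ctmxM AXA.
rewrite wmp_mulmx_ct !mulmxA mulmxK ?hpd_unit //.
by congr (_ *m _ *m _); rewrite -!mulmxA AXA'.
Qed.

Lemma wmp_sharp_mulmx_proj : Ash *m A *m (X *m A) = Ash *m A.
Proof. by rewrite mulmxA wmp_sharp_mulmx. Qed.

Lemma wmp_sharp_rinv : Ash *m A *m (X *m invmx M *m ctmx X *m N) = X *m A.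
Proof.
by rewrite !mulmxA wmp_sharp_mulmx mulmxK ?hpd_unit // wmp_mulmx_ct.
Qed.

Lemma wmp_rank : \rank (X *m A) = \rank A.
Proof.
have [AXA _ _ _] := wmpX.
apply/eqP; rewrite eqn_leq mxrankM_maxr /=.
by rewrite -{1}AXA -mulmxA mxrankM_maxr.
Qed.

End WeightedMoorePenrose.

Theorem theorem2p4 (C : numClosedFieldType) (m n r : nat)
  (M : 'M[C]_m) (N : 'M[C]_n) (A : 'M[C]_(m, n)) (Aplus : 'M[C]_(n, m)) :
  hpd M -> hpd N -> \rank A = r -> (r < minn m n)%N ->
  is_wmp_inverse M N A Aplus ->
  let Ash := invmx N *m ctmx A *m M in
  forall (i : 'I_n) (j : 'I_m),
    Aplus i j =
      (\sum_(beta : {set 'I_n} | (#|beta| == r) && (i \in beta))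
          pminor (replace_col (Ash *m A) i (col j Ash)) beta)
      / (\sum_(beta : {set 'I_n} | #|beta| == r) pminor (Ash *m A) beta).
Proof.
move=> M_hpd N_hpd rkA _ wmpX Ash i j.
have [_ XAX _ _] := wmpX.
have XA_col : Aplus *m A *m col j Aplus = col j Aplus.
  by rewrite !colE mulmxA XAX.
have P_col : Ash *m A *m col j Aplus = col j Ash.
  by rewrite !colE mulmxA wmp_sharp_mulmx.
have := projector_cramer (wmp_mulmx_sharp N_hpd wmpX) (wmp_sharp_mulmx_proj M_hpd wmpX)
  (wmp_sharp_rinv M_hpd N_hpd wmpX) i XA_col.
by rewrite (wmp_rank wmpX) rkA P_col mxE.
Qed.
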